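(* Let $p$ be a prime and $(a,b,c)$ a primitive positive definite form of discriminant $\Delta<0$. Then $$P_{p,0}(a,b,c,q)=\begin{cases}(a,bp,cp^2,q), & p\mid a,\ \left(\frac{\Delta}{p}\right)=0,\\ f_1(q), & p\nmid a,\ \left(\frac{\Delta}{p}\right)=0,\\ (a,b,c,q^{p^2}), & \left(\frac{\Delta}{p}\right)=-1,\\ f_2(q)+(a,pb,cp^2,q)-(a,b,c,q^{p^2}), & p\mid a,\ \left(\frac{\Delta}{p}\right)=1,\\ f_3(q)+f_4(q)-(a,b,c,q^{p^2}), & p\nmid a,\ \left(\frac{\Delta}{p}\right)=1,\end{cases}$$ where $f_i(q):=(ap^2,\,p(b+2ah_i),\,ah_i^2+bh_i+c,\,q)$ and $0\le h_i<p$ are: for $p$ odd, $h_1\equiv -b/(2a)$, $h_2\equiv -c/b$, $h_3\equiv(-b+\sqrt{\Delta})/(2a)$, $h_4\equiv(-b-\sqrt{\Delta})/(2a)\pmod p$ ($\sqrt\Delta$ a fixed square root of $\Delta$ mod $p$); for $p=2$, $h_1\equiv h_2\equiv h_3\equiv c\pmod 2$ and $h_4\not\equiv h_3\pmod 2$.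
   Context: For integers $A,B,C$ with $A>0$, $B^2-4AC<0$, the theta series is the formal power series $(A,B,C,q):=\sum_{(x,y)\in\mathbb Z^2}q^{Ax^2+Bxy+Cy^2}=\sum_{n\ge0}(A,B,C;n)q^n$, where $(A,B,C;n)$ is the number of representations of $n$ by $Ax^2+Bxy+Cy^2$; $(A,B,C,q^{k})$ denotes this series with $q$ replaced by $q^k$. For $m\ge1$ and $0\le r<m$, the projection operator is $P_{m,r}\sum_{n\ge0}a(n)q^n=\sum_{n\ge0}a(mn+r)q^{mn+r}$. $\left(\frac{\Delta}{p}\right)$ is the Kronecker symbol. *)

From HB Require Import structures.
From mathcomp Require Import all_boot all_order all_algebra.
Set Implicit Arguments. Unset Strict Implicit. Unset Printing Implicit Defensive.
Import Order.TTheory GRing.Theory Num.Theory.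
Local Open Scope ring_scope.

Definition qform (A B C x y : int) : int := A * x ^+ 2 + B * x * y + C * y ^+ 2.

(* Search radius: for a positive definite form, any (x,y) with Q(x,y) = n
   satisfies |x| <= 4 C n and |y| <= 4 A n, hence lies in the box below. *)
Definition rep_bound (A C : int) (n : nat) : nat := (4 * (`|A| + `|C|) * n)%N.

Definition box (N : nat) : seq int := [seq (i%:Z - N%:Z) | i <- iota 0 (2 * N).+1].

(* (A,B,C;n): the number of (x,y) in Z^2 with A x^2 + B x y + C y^2 = n
   (for positive definite forms; all representations lie in the box). *)
Definition rep (A B C : int) (n : nat) : nat :=
  let N := rep_bound A C n in
  (\sum_(x <- box N) \sum_(y <- box N) (qform A B C x y == n%:Z))%N.

(* Formal power series with integer coefficients, as coefficient functions. *)
Definition theta (A B C : int) : nat -> int := fun n => (rep A B C n)%:Z.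

Definition theta_pow (k : nat) (A B C : int) : nat -> int :=
  fun n => if (k %| n)%N then (rep A B C (n %/ k))%:Z else 0.

Definition proj (m r : nat) (f : nat -> int) : nat -> int :=
  fun n => if (n %% m == r)%N then f n else 0.

Definition kron (D : int) (p : nat) : int :=
  if p == 2%N then
    (if (2 %| D)%Z then 0
     else if ((D %% 8)%Z == 1) || ((D %% 8)%Z == 7) then 1 else -1)
  else if (p%:Z %| D)%Z then 0
  else if [exists x : 'I_p, (p%:Z %| (x%:Z) ^+ 2 - D)%Z] then 1 else -1.

Definition primitive_form (A B C : int) : Prop := gcdz (gcdz A B) C = 1.

Definition disc (A B C : int) : int := B ^+ 2 - 4 * A * C.

Definition ftheta (p : nat) (a b c : int) (h : nat) : nat -> int :=
  theta (a * (p%:Z) ^+ 2) (p%:Z * (b + 2 * a * h%:Z))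
        (a * (h%:Z) ^+ 2 + b * h%:Z + c).

Definition congz (p : nat) (x y : int) : Prop := (p%:Z %| x - y)%Z.

(* Conditions defining h_1, ..., h_4 (with 0 <= h < p imposed separately). *)
Definition hcond1 (p : nat) (a b c : int) (h : nat) : Prop :=
  if p == 2%N then congz 2 h%:Z c else congz p (2 * a * h%:Z) (- b).
Definition hcond2 (p : nat) (a b c : int) (h : nat) : Prop :=
  if p == 2%N then congz 2 h%:Z c else congz p (b * h%:Z) (- c).
(* s is the fixed square root of the discriminant mod p (used for p odd) *)
Definition hcond3 (p : nat) (a b c s : int) (h : nat) : Prop :=
  if p == 2%N then congz 2 h%:Z c else congz p (2 * a * h%:Z) (- b + s).
Definition hcond4 (p : nat) (a b c s : int) (h3 h : nat) : Prop :=
  if p == 2%N then ~ congz 2 h%:Z h3%:Z else congz p (2 * a * h%:Z) (- b - s).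

From HB Require Import structures.
From mathcomp Require Import all_boot all_order all_algebra zify ring.
Import Order.TTheory GRing.Theory Num.Theory.
Set Implicit Arguments. Unset Strict Implicit. Unset Printing Implicit Defensive.
Local Open Scope ring_scope.

(* A representation n = Q(x, y) satisfies p | n iff (x, y) reduces mod p to a
   zero of Q over F_p.  Writing D for the discriminant, that zero set is the
   line y = 0 when p | a and p | D (primitivity forces c <> 0 mod p), the double
   line x = h1 y when p does not divide a but divides D, the origin alone when D
   is a non-square mod p, and two lines meeting only at the origin when D is a
   non-zero square, read off from the factorisations Q = a (x - h3 y) (x - h4 y)
   and, when p | a, Q = b y (x - h2 y).  The integer points over x = h y are
   (h y + p z, y), on which Q becomes the form (a p^2, p (b + 2 a h), Q(h, 1)) in
   (z, y); those over y = 0 are (x, p y), giving (a, p b, c p^2); those over the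
   origin form p Z^2, giving the series in q^(p^2).  Inclusion-exclusion over two
   lines gives the split cases.  For p = 2 the roots are read off from D mod 8:
   D = 1 + 4 a c (mod 8) when b is odd. *)

Definition posdef (A B C : int) : bool := (0 < A) && (disc A B C < 0).

Lemma qform_swap (A B C x y : int) : qform A B C x y = qform C B A y x.
Proof. by rewrite /qform; ring. Qed.

Lemma posdef_swap (A B C : int) : posdef A B C -> posdef C B A.
Proof.
rewrite /posdef => /andP [A_gt0 D_lt0].
have -> : disc C B A = disc A B C by rewrite /disc; ring.
rewrite D_lt0 andbT; have := sqr_ge0 B.
by move: A_gt0 D_lt0; rewrite /disc; clear; nia.
Qed.

Lemma posdef_abs_le (A B C x y : int) : posdef A B C -> `|y| <= 4 * A * qform A B C x y.
Proof.
case/andP => A_gt0 D_lt0.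
have -> : 4 * A * qform A B C x y = (2 * A * x + B * y) ^+ 2 - disc A B C * y ^+ 2.
  by rewrite /qform /disc; ring.
have := sqr_ge0 (2 * A * x + B * y); rewrite expr2.
by move: D_lt0; clear; nia.
Qed.

Definition pbox (N : nat) : seq (int * int) := [seq (x, y) | x <- box N, y <- box N].

Lemma mem_box (N : nat) (x : int) : (x \in box N) = (`|x| <= N%:Z).
Proof.
apply/mapP/idP => [[i] | x_le].
  by rewrite mem_iota add0n => i_lt ->; lia.
by exists (absz (x + N%:Z)); rewrite ?mem_iota; lia.
Qed.

Lemma uniq_box (N : nat) : uniq (box N).
Proof. by rewrite map_inj_uniq ?iota_uniq // => i j /=; lia. Qed.

Lemma mem_pbox (N : nat) (w : int * int) :
  (w \in pbox N) = (`|w.1| <= N%:Z) && (`|w.2| <= N%:Z).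
Proof.
apply/allpairsP/andP => [[[x y] [/= x_in y_in ->]] | [x_le y_le]].
  by rewrite -!mem_box.
by exists w; rewrite !mem_box; case: w x_le y_le.
Qed.

Lemma uniq_pbox (N : nat) : uniq (pbox N).
Proof. by apply: allpairs_uniq; rewrite ?uniq_box // => -[x y] [x' y']. Qed.

Lemma qform_mem_pbox (A B C : int) (n : nat) (w : int * int) : posdef A B C ->
  qform A B C w.1 w.2 = n%:Z -> w \in pbox (rep_bound A C n).
Proof.
case: w => x y /= pd Qxy; have pd' := posdef_swap pd.
have := @posdef_abs_le _ _ _ x y pd; have := @posdef_abs_le _ _ _ y x pd'.
case/andP: pd => A_gt0 _; case/andP: pd' => C_gt0 _.
rewrite -qform_swap Qxy mem_pbox /rep_bound /=.
by move: A_gt0 C_gt0; clear; nia.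
Qed.

Definition rep_in (A B C : int) (n : nat) (P : pred (int * int)) : nat :=
  count [pred w | (qform A B C w.1 w.2 == n%:Z) && P w] (pbox (rep_bound A C n)).

Lemma rep_in_predT (A B C : int) (n : nat) : rep A B C n = rep_in A B C n predT.
Proof.
rewrite /rep_in -sum1_count big_mkcond big_allpairs.
by apply: eq_bigr => x _; apply: eq_bigr => y _; rewrite /= andbT; case: eqP.
Qed.

Lemma count_inj_onto (T U : eqType) (P : pred T) (Q : pred U) (s : seq T) (t : seq U)
    (f : T -> U) :
  uniq s -> uniq t -> injective f -> {subset P <= s} -> {subset Q <= t} ->
  (forall x, P x -> Q (f x)) -> (forall y, Q y -> exists2 x, P x & y = f x) ->
  count P s = count Q t.
Proof.
move=> s_uniq t_uniq f_inj sP tQ PQ QP.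
rewrite -!size_filter -(size_map f); apply/perm_size/uniq_perm.
- by rewrite map_inj_uniq // filter_uniq.
- by rewrite filter_uniq.
move=> y; apply/mapP/idP => [[x] | ].
  by rewrite !mem_filter => /andP [Px _] ->; rewrite (PQ x Px) (tQ _ (PQ x Px)).
rewrite mem_filter => /andP [/QP [x Px ->] _].
by exists x; rewrite // mem_filter Px sP.
Qed.

Lemma eq_rep_in (A B C : int) (n : nat) (P1 P2 : pred (int * int)) :
  (forall w, qform A B C w.1 w.2 = n%:Z -> P1 w = P2 w) ->
  rep_in A B C n P1 = rep_in A B C n P2.
Proof.
by move=> P12; apply: eq_count => w /=; case: eqP => // /P12 ->.
Qed.

Lemma rep_in_eq0 (A B C : int) (n : nat) (P : pred (int * int)) :
  (forall w, qform A B C w.1 w.2 = n%:Z -> ~~ P w) -> rep_in A B C n P = 0%N.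
Proof.
move=> notP; apply/eqP; rewrite -leqn0 leqNgt -has_count; apply/hasPn => w _ /=.
by case: eqP => // /notP.
Qed.

Lemma rep_inUI (A B C : int) (n : nat) (P1 P2 : pred (int * int)) :
  (rep_in A B C n (predU P1 P2) + rep_in A B C n (predI P1 P2) =
   rep_in A B C n P1 + rep_in A B C n P2)%N.
Proof.
rewrite /rep_in -[RHS]count_predUI; congr (_ + _)%N; apply: eq_count => w /=.
  by rewrite andb_orr.
by rewrite andbACA andbb.
Qed.

Lemma rep_in_image (A B C A' B' C' : int) (P : pred (int * int))
    (f : int * int -> int * int) (k m : nat) :
  posdef A B C -> posdef A' B' C' -> (0 < k)%N -> injective f ->
  (forall w, reflect (exists z, w = f z) (P w)) ->
  (forall z, qform A B C (f z).1 (f z).2 = k%:Z * qform A' B' C' z.1 z.2) ->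
  rep_in A B C (k * m) P = rep A' B' C' m.
Proof.
move=> pd pd' k_gt0 f_inj fP Qf; rewrite rep_in_predT /rep_in PoszM.
have k_neq0 : k%:Z != 0 by rewrite eqz_nat -lt0n.
have Q'E z : (qform A B C (f z).1 (f z).2 == k%:Z * m%:Z) = (qform A' B' C' z.1 z.2 == m%:Z).
  by rewrite Qf (inj_eq (mulfI k_neq0)).
symmetry; apply: (count_inj_onto (f := f)); rewrite ?uniq_pbox //.
- by move=> z /andP [/eqP Qz _]; apply: qform_mem_pbox Qz.
- by move=> w /andP [/eqP Qw _]; apply: qform_mem_pbox Qw.
- by move=> z /andP [Qz _]; rewrite /= Q'E Qz; apply/fP; exists z.
by move=> w /andP [Qw /fP [z wE]]; exists z; rewrite //= -Q'E -wE Qw.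
Qed.

Lemma proj_theta (p : nat) (A B C : int) (P : pred (int * int)) (n : nat) :
  (forall w, P w = (p%:Z %| qform A B C w.1 w.2)%Z) ->
  proj p 0 (theta A B C) n = (rep_in A B C n P)%:Z.
Proof.
move=> PE; rewrite /proj /theta rep_in_predT; case: ifP => p_dvd_n; congr Posz.
  by apply: eq_rep_in => w Qw; rewrite PE Qw.
by symmetry; apply: rep_in_eq0 => w Qw; rewrite PE Qw; apply: negbT.
Qed.

Lemma proj_theta_union (p : nat) (A B C : int) (P1 P2 P0 : pred (int * int)) (n : nat) :
  (forall w, P1 w || P2 w = (p%:Z %| qform A B C w.1 w.2)%Z) ->
  (forall w, P1 w && P2 w = P0 w) ->
  proj p 0 (theta A B C) n =
    (rep_in A B C n P1)%:Z + (rep_in A B C n P2)%:Z - (rep_in A B C n P0)%:Z.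
Proof.
move=> P12E P0E; rewrite (proj_theta (P := predU P1 P2)) //.
rewrite -(@eq_rep_in _ _ _ _ (predI P1 P2) P0) => [|w _]; last exact: P0E.
by rewrite -PoszD -rep_inUI PoszD addrK.
Qed.

Definition line_mod (p h : nat) : pred (int * int) := fun w => (p%:Z %| w.1 - h%:Z * w.2)%Z.
Definition xaxis_mod (p : nat) : pred (int * int) := fun w => (p%:Z %| w.2)%Z.
Definition origin_mod (p : nat) : pred (int * int) :=
  fun w => (p%:Z %| w.1)%Z && (p%:Z %| w.2)%Z.

Section Sublattices.

Variables (p : nat) (a b c : int).
Hypotheses (p_gt0 : (0 < p)%N) (abc_posdef : posdef a b c).

Let pZ_gt0 : 0 < p%:Z. Proof. by rewrite ltz_nat. Qed.
Let pZ_neq0 : p%:Z != 0. Proof. by rewrite gt_eqF. Qed.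

Lemma posdef_scale (A' B' C' : int) :
  0 < A' -> disc A' B' C' = p%:Z ^+ 2 * disc a b c -> posdef A' B' C'.
Proof.
move=> A'_gt0 discE; case/andP: abc_posdef => _ D_lt0.
by rewrite /posdef A'_gt0 discE pmulr_rlt0 // exprn_gt0.
Qed.

Lemma rep_in_line_mod (h n : nat) :
  rep_in a b c n (line_mod p h) =
  rep (a * p%:Z ^+ 2) (p%:Z * (b + 2 * a * h%:Z)) (a * h%:Z ^+ 2 + b * h%:Z + c) n.
Proof.
case/andP: (abc_posdef) => a_gt0 _.
rewrite -{1}[n]mul1n.
apply: (rep_in_image (f := fun z => (h%:Z * z.2 + p%:Z * z.1, z.2))) => //.
- apply: posdef_scale; first by rewrite pmulr_rgt0 // exprn_gt0.
  by rewrite /disc; ring.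
- move=> [z y] [z' y'] /= [zE yE]; subst y'; congr (_, _).
  by apply: (mulfI pZ_neq0); apply: (addrI _ zE).
- move=> [x y]; apply: (iffP dvdzP) => [[z xE] | [[z y'] [+ +]]] /=.
    by exists (z, y); congr (_, _); rewrite /= [p%:Z * z]mulrC -xE; ring.
  by move=> -> ->; exists z; ring.
by move=> [z y]; rewrite /qform /=; ring.
Qed.

Lemma rep_in_xaxis_mod (n : nat) :
  rep_in a b c n (xaxis_mod p) = rep a (p%:Z * b) (c * p%:Z ^+ 2) n.
Proof.
case/andP: (abc_posdef) => a_gt0 _.
rewrite -{1}[n]mul1n; apply: (rep_in_image (f := fun z => (z.1, p%:Z * z.2))) => //.
- by apply: posdef_scale => //; rewrite /disc; ring.
- by move=> [x y] [x' y'] [-> /(mulfI pZ_neq0) ->].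
- move=> [x y]; rewrite /xaxis_mod /=.
  apply: (iffP dvdzP) => [[z ->] | [[x' z] [_ +]]] /=.
    by exists (x, z); rewrite /= mulrC.
  by move=> ->; exists z; rewrite mulrC.
by move=> [x y]; rewrite /qform /=; ring.
Qed.

Lemma rep_in_origin_mod (n : nat) :
  (rep_in a b c n (origin_mod p))%:Z = theta_pow (p ^ 2) a b c n.
Proof.
have p2_gt0 : (0 < p ^ 2)%N by rewrite expn_gt0 p_gt0.
have origin_modP w : reflect (exists z, w = (p%:Z * z.1, p%:Z * z.2)) (origin_mod p w).
  case: w => x y; rewrite /origin_mod /=.
  apply: (iffP andP) => [[/dvdzP [x' ->] /dvdzP [y' ->]] | [[x' y'] [-> ->]]].
    by exists (x', y'); rewrite /= ![_ * p%:Z]mulrC.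
  by rewrite /= !dvdz_mulr.
have Q_origin z : qform a b c (p%:Z * z.1) (p%:Z * z.2) = (p ^ 2)%N%:Z * qform a b c z.1 z.2.
  by rewrite expnS expn1 PoszM /qform; ring.
rewrite /theta_pow; case: ifP => [/divnK nE | p2_ndvd_n].
  rewrite -{1}nE mulnC; congr Posz.
  apply: (rep_in_image (f := fun z => (p%:Z * z.1, p%:Z * z.2))) => //.
  by move=> [x y] [x' y'] /= [/(mulfI pZ_neq0) -> /(mulfI pZ_neq0) ->].
congr Posz; apply: rep_in_eq0 => w Qw; apply/negP => /origin_modP [z wE].
have : ((p ^ 2)%N%:Z %| n%:Z)%Z by rewrite -Qw wE /= Q_origin dvdz_mulr.
exact: elimF idP p2_ndvd_n.
Qed.

End Sublattices.

Section QuadraticFormsOverRings.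

Variable R : comNzRingType.

Definition qformR (A B C X Y : R) : R := A * X ^+ 2 + B * X * Y + C * Y ^+ 2.

Lemma qformR_factor (A B C H K X Y : R) :
  A * (H + K) = - B -> A * H * K = C -> qformR A B C X Y = A * ((X - H * Y) * (X - K * Y)).
Proof. by move=> sumHK prodHK; rewrite /qformR -[B]opprK -sumHK -prodHK; ring. Qed.

Lemma qformR0_factor (B C H X Y : R) : B * H = - C -> qformR 0 B C X Y = B * Y * (X - H * Y).
Proof. by move=> BH; rewrite /qformR -[C]opprK -BH; ring. Qed.

Lemma intr_qform (A B C x y : int) :
  (qform A B C x y)%:~R = qformR A%:~R B%:~R C%:~R x%:~R y%:~R.
Proof. by rewrite /qform /qformR !(intrD, intrM, rmorphXn). Qed.

Lemma intr_disc (A B C : int) :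
  (disc A B C)%:~R = B%:~R ^+ 2 - 4 * A%:~R * C%:~R :> R.
Proof. by rewrite /disc !(intrD, intrN, intrM, rmorphXn). Qed.

End QuadraticFormsOverRings.

Section QuadraticFormsOverFields.

Variable F : fieldType.

Lemma qformR_anisotropic (A B C X Y : F) :
  A != 0 -> (forall t, A * t ^+ 2 + B * t + C != 0) ->
  (qformR A B C X Y == 0) = (X == 0) && (Y == 0).
Proof.
move=> A_neq0 no_root; apply/idP/andP => [Q0 | [/eqP -> /eqP ->]]; last first.
  by rewrite /qformR; apply/eqP; ring.
have [Y0 | Y_neq0] := eqVneq Y 0.
  move: Q0; rewrite Y0 /qformR !(mulr0, expr0n, addr0) /= mulf_eq0 (negbTE A_neq0).
  by rewrite expf_eq0.
have := no_root (X / Y).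
have -> : A * (X / Y) ^+ 2 + B * (X / Y) + C = qformR A B C X Y / Y ^+ 2.
  by rewrite /qformR; field.
by rewrite (eqP Q0) mul0r eqxx.
Qed.

Lemma lines_meet (H K X Y : F) :
  H != K -> (X - H * Y == 0) && (X - K * Y == 0) = (X == 0) && (Y == 0).
Proof.
move=> H_neq_K; apply/andP/andP => [[/eqP XH /eqP XK] | [/eqP -> /eqP ->]]; last first.
  by split; rewrite mulr0 subr0.
have /eqP : (K - H) * Y = (X - H * Y) - (X - K * Y) by ring.
rewrite XH XK subrr mulf_eq0 subr_eq0 eq_sym (negbTE H_neq_K) /= => /eqP Y0.
by move: XH; rewrite Y0 mulr0 subr0 => ->.
Qed.

Lemma quadratic_vieta (A B C S H K : F) :
  (2 : F) != 0 -> A != 0 -> S ^+ 2 = B ^+ 2 - 4 * A * C ->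
  2 * A * H = - B + S -> 2 * A * K = - B - S ->
  A * (H + K) = - B /\ A * H * K = C.
Proof.
move=> two_neq0 A_neq0 SE HE KE; have twoA_neq0 : 2 * A != 0 by rewrite mulf_neq0.
have four_neq0 : (4 : F) != 0 by rewrite (_ : 4 = 2 * 2) ?mulf_neq0 //; ring.
have -> : H = (- B + S) / (2 * A) by rewrite -HE [2 * A * H]mulrC mulfK.
have -> : K = (- B - S) / (2 * A) by rewrite -KE [2 * A * K]mulrC mulfK.
have -> : C = (B ^+ 2 - S ^+ 2) / (4 * A).
  by rewrite SE; field; rewrite A_neq0 four_neq0.
by split; field; rewrite ?two_neq0 ?A_neq0 ?four_neq0.
Qed.

Lemma nonsquare_disc_no_root (A B C : F) :
  (forall Z, Z ^+ 2 != B ^+ 2 - 4 * A * C) ->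
  A != 0 /\ forall t, A * t ^+ 2 + B * t + C != 0.
Proof.
move=> nonsq; split.
  by apply: contraNneq (nonsq B) => ->; rewrite mulr0 mul0r subr0.
move=> t; apply: contraNneq (nonsq (2 * A * t + B)) => root.
by apply/eqP; rewrite -[RHS]add0r -(mulr0 (4 * A)) -root; ring.
Qed.

End QuadraticFormsOverFields.

Section ReductionModPrime.

Variable p : nat.
Hypothesis p_pr : prime p.

Lemma dvdz_Fp (z : int) : (p%:Z %| z)%Z = (z%:~R == 0 :> 'F_p).
Proof. exact: dvdz_pcharf (pchar_Fp p_pr) z. Qed.

Lemma congz_Fp (x y : int) : congz p x y <-> x%:~R = y%:~R :> 'F_p.
Proof. by rewrite /congz dvdz_Fp intrB subr_eq0; split => /eqP. Qed.

Lemma two_Fp_neq0 : p != 2 -> (2 : 'F_p) != 0.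
Proof.
move=> p_neq2; rewrite -(dvdn_pcharf (pchar_Fp p_pr)).
apply: contra p_neq2 => /(dvdn_leq (isT : (0 < 2)%N)).
by have := prime_gt1 p_pr; lia.
Qed.

Lemma kronN1_nonsquare (D : int) :
  p != 2 -> kron D p = -1 -> forall Z : 'F_p, Z ^+ 2 != D%:~R.
Proof.
rewrite /kron => /negbTE ->; case: ifP => // _; case: existsP => // nonsq _ Z.
apply/eqP => ZE; apply: nonsq.
have Z_lt_p : (Z < p)%N by rewrite -[p in (_ < p)%N](Fp_cast p_pr).
exists (Ordinal Z_lt_p); rewrite dvdz_Fp intrB rmorphXn /= -ZE.
by rewrite -pmulrn natr_Zp subrr.
Qed.

End ReductionModPrime.

Lemma kron_eq0 (D : int) (p : nat) : (kron D p == 0) = (p%:Z %| D)%Z.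
Proof. by rewrite /kron; case: (p =P 2%N) => [-> | _]; do 2?case: ifP. Qed.

Lemma F2_cases (x : 'F_2) : x = 0 \/ x = 1.
Proof. by case: x => [[|[|//]] x_lt]; [left | right]; apply: val_inj. Qed.

Lemma F2_neq0 (x : 'F_2) : x != 0 -> x = 1.
Proof. by case: (F2_cases x) => ->. Qed.

Lemma F2_oppr (x : 'F_2) : - x = x.
Proof. by case: (F2_cases x) => ->; apply/eqP. Qed.

Lemma F2_sqr (x : 'F_2) : x ^+ 2 = x.
Proof. by case: (F2_cases x) => ->; apply/eqP. Qed.

Lemma disc_mod8 (a b c : int) :
  ~~ (2 %| b)%Z -> (disc a b c %% 8)%Z = if (2 %| a * c)%Z then 1 else 5.
Proof.
move=> b_odd; have [k ->] : exists k, b = 2 * k + 1 by exists (b %/ 2)%Z; lia.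
have [m km] : exists m, k * (k + 1) = 2 * m.
  have [[j ->] | [j ->]] : (exists j, k = 2 * j) \/ (exists j, k = 2 * j + 1).
  - by case: (boolP (2 %| k)%Z) => k2; [left | right]; exists (k %/ 2)%Z; lia.
  - by exists (j * (2 * j + 1)); ring.
  by exists ((2 * j + 1) * (j + 1)); ring.
have -> : disc a (2 * k + 1) c = 4 * (k * (k + 1)) - 4 * (a * c) + 1.
  by rewrite /disc; ring.
rewrite km; case: ifP => ac2.
  have [l ->] : exists l, a * c = 2 * l by exists (a * c %/ 2)%Z; lia.
  lia.
have [l ->] : exists l, a * c = 2 * l + 1 by exists (a * c %/ 2)%Z; lia.
lia.
Qed.

Lemma kron_disc2 (a b c : int) :
  kron (disc a b c) 2 = if (2 %| b)%Z then 0 else if (2 %| a * c)%Z then 1 else -1.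
Proof.
have four0 : 4 = 0 :> 'F_2 by apply/eqP.
have disc2 : (2 %| disc a b c)%Z = (2 %| b)%Z.
  rewrite !(dvdz_Fp (isT : prime 2)) intr_disc four0 !mul0r subr0.
  by case: (F2_cases b%:~R) => ->.
rewrite /kron /= disc2; case: ifP => // /negbT b_odd.
by rewrite disc_mod8 //; case: (2 %| (a * c : int))%Z.
Qed.

Section ProjectionByPrime.

Variables (p : nat) (a b c : int).
Hypotheses (p_pr : prime p) (a_gt0 : 0 < a) (disc_lt0 : disc a b c < 0).

Local Notation "z %:Fp" := ((z : int)%:~R : 'F_p).

Let abc_posdef : posdef a b c. Proof. exact/andP. Qed.
Let p_gt0 : (0 < p)%N. Proof. exact: prime_gt0. Qed.

Lemma dvd_qform_Fp (w : int * int) :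
  (p%:Z %| qform a b c w.1 w.2)%Z = (qformR a%:Fp b%:Fp c%:Fp w.1%:Fp w.2%:Fp == 0).
Proof. by rewrite dvdz_Fp // intr_qform. Qed.

Lemma line_mod_Fp (h : nat) (w : int * int) :
  line_mod p h w = (w.1%:Fp - h%:Fp * w.2%:Fp == 0).
Proof. by rewrite /line_mod dvdz_Fp // intrB intrM. Qed.

Lemma xaxis_mod_Fp (w : int * int) : xaxis_mod p w = (w.2%:Fp == 0).
Proof. by rewrite /xaxis_mod dvdz_Fp. Qed.

Lemma origin_mod_Fp (w : int * int) : origin_mod p w = (w.1%:Fp == 0) && (w.2%:Fp == 0).
Proof. by rewrite /origin_mod !dvdz_Fp. Qed.

Lemma disc_Fp : (disc a b c)%:Fp = b%:Fp ^+ 2 - 4 * a%:Fp * c%:Fp.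
Proof. exact: intr_disc. Qed.

Lemma proj_theta_ramified_dvd (n : nat) : primitive_form a b c ->
  (p%:Z %| a)%Z -> kron (disc a b c) p = 0 ->
  proj p 0 (theta a b c) n = theta a (b * p%:Z) (c * p%:Z ^+ 2) n.
Proof.
move=> abc_prim p_dvd_a /eqP; rewrite kron_eq0 dvdz_Fp // disc_Fp => /eqP D0.
have a0 : a%:Fp = 0 by apply/eqP; rewrite -dvdz_Fp.
have b0 : b%:Fp = 0.
  by apply/eqP; move: D0; rewrite a0 mulr0 mul0r subr0 => /eqP; rewrite expf_eq0.
have c_neq0 : c%:Fp != 0.
  rewrite -dvdz_Fp //; apply: contraL (prime_gt1 p_pr) => p_dvd_c.
  have : (p%:Z %| gcdz (gcdz a b) c)%Z by rewrite !dvdz_gcd p_dvd_a p_dvd_c dvdz_Fp // b0.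
  by rewrite abc_prim -ltnNge ltnS => /dvdn_leq->.
rewrite /theta mulrC -rep_in_xaxis_mod //; apply: proj_theta => w.
rewrite xaxis_mod_Fp dvd_qform_Fp /qformR a0 b0 !mul0r !add0r.
by rewrite mulf_eq0 (negbTE c_neq0) expf_eq0.
Qed.

Lemma ramified_double_root (h : nat) :
  a%:Fp != 0 -> (disc a b c)%:Fp = 0 -> hcond1 p a b c h ->
  a%:Fp * (h%:Fp + h%:Fp) = - b%:Fp /\ a%:Fp * h%:Fp * h%:Fp = c%:Fp.
Proof.
rewrite disc_Fp /hcond1 => a_neq0 D0; case: eqP => [p2 | /eqP p_neq2] /=.
  move/(congz_Fp (isT : prime 2)) => hE; rewrite p2 in a_neq0 D0 *.
  have four0 : 4 = 0 :> 'F_2 by apply/eqP.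
  move: D0; rewrite (F2_neq0 a_neq0) four0 !mul0r subr0 F2_sqr hE => ->.
  by split; case: (F2_cases c%:~R) => ->; apply/eqP.
move/(congz_Fp p_pr) => hE.
apply: (quadratic_vieta (two_Fp_neq0 p_pr p_neq2) a_neq0 (S := 0)).
- by rewrite D0 expr0n.
- by rewrite addr0 -intrN -hE !intrM.
by rewrite subr0 -intrN -hE !intrM.
Qed.

Lemma proj_theta_ramified (h n : nat) :
  ~~ (p%:Z %| a)%Z -> kron (disc a b c) p = 0 -> hcond1 p a b c h ->
  proj p 0 (theta a b c) n = ftheta p a b c h n.
Proof.
rewrite dvdz_Fp // => a_neq0 /eqP; rewrite kron_eq0 dvdz_Fp // => /eqP D0 hE.
have [sum_hh prod_hh] := ramified_double_root a_neq0 D0 hE.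
rewrite /ftheta /theta -rep_in_line_mod //; apply: proj_theta => w.
rewrite line_mod_Fp dvd_qform_Fp (qformR_factor _ _ sum_hh prod_hh).
by rewrite mulf_eq0 (negbTE a_neq0) -expr2 expf_eq0.
Qed.

Lemma inert_no_root : kron (disc a b c) p = -1 ->
  a%:Fp != 0 /\ forall t, a%:Fp * t ^+ 2 + b%:Fp * t + c%:Fp != 0.
Proof.
case: (p =P 2%N) => [p2 | /eqP p_neq2] kronE; last first.
  by apply: nonsquare_disc_no_root => Z; rewrite -disc_Fp; apply: kronN1_nonsquare.
rewrite p2 in kronE *; move: kronE; rewrite kron_disc2.
case: ifP => // /negbT; case: ifP => // /negbT ac_odd b_odd _.
rewrite !(dvdz_Fp (isT : prime 2)) intrM mulf_eq0 negb_or in b_odd ac_odd.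
case/andP: ac_odd => /F2_neq0 -> /F2_neq0 ->; rewrite (F2_neq0 b_odd).
by split => // t; case: (F2_cases t) => ->.
Qed.

Lemma proj_theta_inert (n : nat) : kron (disc a b c) p = -1 ->
  proj p 0 (theta a b c) n = theta_pow (p ^ 2) a b c n.
Proof.
move=> /inert_no_root [a_neq0 no_root].
rewrite -rep_in_origin_mod //; apply: proj_theta => w.
by rewrite origin_mod_Fp dvd_qform_Fp qformR_anisotropic.
Qed.

Lemma split_dvd_root (h : nat) :
  b%:Fp != 0 -> hcond2 p a b c h -> b%:Fp * h%:Fp = - c%:Fp.
Proof.
move=> b_neq0; rewrite /hcond2; case: eqP => [p2 | _] /=; last first.
  by move/(congz_Fp p_pr); rewrite intrM intrN.
move/(congz_Fp (isT : prime 2)) => hE; rewrite p2 in b_neq0 *.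
by rewrite (F2_neq0 b_neq0) mul1r hE F2_oppr.
Qed.

Lemma proj_theta_split_dvd (h n : nat) :
  (p%:Z %| a)%Z -> kron (disc a b c) p = 1 -> hcond2 p a b c h ->
  proj p 0 (theta a b c) n =
    ftheta p a b c h n + theta a (p%:Z * b) (c * p%:Z ^+ 2) n - theta_pow (p ^ 2) a b c n.
Proof.
rewrite dvdz_Fp // => /eqP a0 kronE hE.
have b_neq0 : b%:Fp != 0.
  have : (disc a b c)%:Fp != 0 by rewrite -dvdz_Fp // -kron_eq0 kronE.
  by rewrite disc_Fp a0 mulr0 mul0r subr0 expf_eq0.
have bh := split_dvd_root b_neq0 hE.
rewrite /ftheta /theta -rep_in_line_mod // -rep_in_xaxis_mod // -rep_in_origin_mod //.
apply: proj_theta_union => w; rewrite line_mod_Fp xaxis_mod_Fp.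
  by rewrite dvd_qform_Fp a0 (qformR0_factor _ _ bh) !mulf_eq0 (negbTE b_neq0) orbC.
rewrite origin_mod_Fp andbC.
by case: eqP => [-> | _]; rewrite ?mulr0 ?subr0 ?andbT ?andbF.
Qed.

Lemma split_roots (s : int) (h3 h4 : nat) :
  a%:Fp != 0 -> kron (disc a b c) p = 1 -> congz p (s ^+ 2) (disc a b c) ->
  hcond3 p a b c s h3 -> hcond4 p a b c s h3 h4 ->
  [/\ h3%:Fp != h4%:Fp, a%:Fp * (h3%:Fp + h4%:Fp) = - b%:Fp
    & a%:Fp * h3%:Fp * h4%:Fp = c%:Fp].
Proof.
move=> a_neq0 kronE sE; rewrite /hcond3 /hcond4; case: eqP => [p2 | /eqP p_neq2] /=.
  move=> /(congz_Fp (isT : prime 2)) h3E h4_ncong; rewrite p2 in a_neq0 kronE *.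
  move: kronE; rewrite kron_disc2; case: ifP => // /negbT b_odd; case: ifP => // ac_even _.
  rewrite !(dvdz_Fp (isT : prime 2)) intrM mulf_eq0 (negbTE a_neq0) /= in b_odd ac_even.
  have h4E : h4%:~R = 1 :> 'F_2.
    apply/F2_neq0/eqP => h40; apply/h4_ncong/(congz_Fp (isT : prime 2)).
    by rewrite h40 h3E (eqP ac_even).
  rewrite (F2_neq0 a_neq0) (F2_neq0 b_odd) h3E (eqP ac_even) h4E.
  by split => //; apply/eqP.
move=> /(congz_Fp p_pr) h3E /(congz_Fp p_pr) h4E.
rewrite !intrM [(_ + s)%:~R]intrD intrN in h3E.
rewrite !intrM [(_ - s)%:~R]intrD !intrN in h4E.
have two_neq0 := two_Fp_neq0 p_pr p_neq2.
have sE' : s%:Fp ^+ 2 = b%:Fp ^+ 2 - 4 * a%:Fp * c%:Fp.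
  by rewrite -rmorphXn -disc_Fp; apply/(congz_Fp p_pr).
have s_neq0 : s%:Fp != 0.
  have : (disc a b c)%:Fp != 0 by rewrite -dvdz_Fp // -kron_eq0 kronE.
  by rewrite disc_Fp -sE' expf_eq0.
have [sumE prodE] := quadratic_vieta two_neq0 a_neq0 sE' h3E h4E.
have diffE : 2 * a%:Fp * (h3%:Fp - h4%:Fp) = 2 * s%:Fp by rewrite mulrBr h3E h4E; ring.
split => //; apply: contra_neq (mulf_neq0 two_neq0 s_neq0) => h34.
by rewrite -diffE h34 subrr mulr0.
Qed.

Lemma proj_theta_split (s : int) (h3 h4 n : nat) :
  ~~ (p%:Z %| a)%Z -> kron (disc a b c) p = 1 -> congz p (s ^+ 2) (disc a b c) ->
  hcond3 p a b c s h3 -> hcond4 p a b c s h3 h4 ->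
  proj p 0 (theta a b c) n =
    ftheta p a b c h3 n + ftheta p a b c h4 n - theta_pow (p ^ 2) a b c n.
Proof.
rewrite dvdz_Fp // => a_neq0 kronE sE h3E h4E.
have [h34 sumE prodE] := split_roots a_neq0 kronE sE h3E h4E.
rewrite /ftheta /theta -!rep_in_line_mod // -rep_in_origin_mod //.
apply: proj_theta_union => w; rewrite !line_mod_Fp.
  by rewrite dvd_qform_Fp (qformR_factor _ _ sumE prodE) !mulf_eq0 (negbTE a_neq0).
by rewrite origin_mod_Fp lines_meet.
Qed.

End ProjectionByPrime.

Theorem lemma4p2 (p : nat) (a b c : int) :
  prime p -> 0 < a -> disc a b c < 0 -> primitive_form a b c ->
  [/\ (p%:Z %| a)%Z -> kron (disc a b c) p = 0 ->
        forall n : nat, proj p 0 (theta a b c) n = theta a (b * p%:Z) (c * p%:Z ^+ 2) n,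
      ~~ (p%:Z %| a)%Z -> kron (disc a b c) p = 0 ->
        forall h1 : nat, (h1 < p)%N -> hcond1 p a b c h1 ->
        forall n : nat, proj p 0 (theta a b c) n = ftheta p a b c h1 n,
      kron (disc a b c) p = -1 ->
        forall n : nat, proj p 0 (theta a b c) n = theta_pow (p ^ 2) a b c n,
      (p%:Z %| a)%Z -> kron (disc a b c) p = 1 ->
        forall h2 : nat, (h2 < p)%N -> hcond2 p a b c h2 ->
        forall n : nat, proj p 0 (theta a b c) n =
          ftheta p a b c h2 n + theta a (p%:Z * b) (c * p%:Z ^+ 2) n
          - theta_pow (p ^ 2) a b c n
    & ~~ (p%:Z %| a)%Z -> kron (disc a b c) p = 1 ->
        forall s : int, congz p (s ^+ 2) (disc a b c) ->
        forall h3 h4 : nat, (h3 < p)%N -> (h4 < p)%N ->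
        hcond3 p a b c s h3 -> hcond4 p a b c s h3 h4 ->
        forall n : nat, proj p 0 (theta a b c) n =
          ftheta p a b c h3 n + ftheta p a b c h4 n - theta_pow (p ^ 2) a b c n].
Proof.
move=> p_pr a_gt0 disc_lt0 abc_prim; split.
- by move=> p_dvd_a kronE n; apply: proj_theta_ramified_dvd.
- by move=> p_ndvd_a kronE h1 _ hE n; apply: proj_theta_ramified.
- by move=> kronE n; apply: proj_theta_inert.
- by move=> p_dvd_a kronE h2 _ hE n; apply: proj_theta_split_dvd.
move=> p_ndvd_a kronE s sE h3 h4 _ _ h3E h4E n.
exact: (proj_theta_split p_pr a_gt0 disc_lt0 n p_ndvd_a kronE sE h3E h4E).
Qed.
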